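(* Let $G$ be a chemical nontrivial cactus on $n$ vertices with $k$ cycles. Then \[R(G)\geq \frac{n}{2}-(k-1)\left(\frac{3}{2}-\sqrt 2\right),\] with equality when no two articulation points of $G$ are adjacent.
   Context: A graph is chemical if every vertex has degree at most $4$. A cactus is a connected graph in which any two cycles share at most one vertex; it is nontrivial if it has no bridges (edges whose removal disconnects the graph). An articulation point is a vertex whose removal disconnects the graph. The Randi\'c index is $R(G)=\sum_{uv\in E(G)}\frac{1}{\sqrt{d_ud_v}}$, where $d_v$ is the degree of $v$. *)

(* Simple graphs: a symmetric irreflexive relation e on a finType T. *)
From HB Require Import structures.
From mathcomp Require Import all_boot all_order all_algebra.
Set Implicit Arguments. Unset Strict Implicit. Unset Printing Implicit Defensive.
Import Order.TTheory GRing.Theory Num.Theory.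

Section Graph.
Variables (T : finType) (e : rel T).

Definition deg (x : T) : nat := #|[set y | e x y]|.

Definition chemical : Prop := forall x, deg x <= 4.

Definition connected_rel (r : rel T) : bool := [forall u, [forall v, connect r u v]].
Definition connected_graph : bool := connected_rel e.

Definition cycle_edges (s : seq T) : {set {set T}} :=
  [set [set x; next s x] | x in [set y in s]].

Definition is_cycle (E : {set {set T}}) : bool :=
  [exists m : 'I_#|T|.+1, exists t : m.-tuple T,
     [&& uniq t, 3 <= m, cycle e t & E == cycle_edges t]].

Definition cycles : {set {set {set T}}} := [set E | is_cycle E].

Definition cycle_vertices (E : {set {set T}}) : {set T} := \bigcup_(f in E) f.

Definition cactus : Prop :=
  connected_graph /\
  forall C1 C2, C1 \in cycles -> C2 \in cycles -> C1 != C2 ->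
    #|cycle_vertices C1 :&: cycle_vertices C2| <= 1.

Definition bridge (x y : T) : bool :=
  e x y && ~~ connected_rel (fun a b => e a b && ([set a; b] != [set x; y])).

(* nontrivial: no bridges *)
Definition no_bridges : Prop := forall x y, ~~ bridge x y.

Definition articulation (v : T) : bool :=
  ~~ [forall u, [forall w, (u != v) ==> (w != v) ==>
        connect (fun a b => [&& e a b, a != v & b != v]) u w]].

(* Randic index: sum over (unordered) edges uv of 1/sqrt(d_u d_v);
   each edge is counted twice in the ordered double sum, hence the 1/2. *)
Definition randic (R : rcfType) : R :=
  (\sum_(u : T) \sum_(v : T | e u v)
      (Num.sqrt ((deg u)%:R * (deg v)%:R))^-1) / 2%:R.

End Graph.

From HB Require Import structures.
From mathcomp Require Import all_boot all_order all_algebra.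
From mathcomp Require Import zify ring lra.
Set Implicit Arguments. Unset Strict Implicit. Unset Printing Implicit Defensive.
Import Order.TTheory GRing.Theory Num.Theory.

(* No bridges and cycles sharing at most one vertex mean that every edge lies on exactly one
   cycle, and each cycle through v contributes 2 to deg v: all degrees are 2 or 4, and a vertex
   of degree 4 lies on two cycles, hence is an articulation point.  Deleting one edge from each
   cycle leaves a spanning tree, so |E| - k = n - 1, while 2|E| = 2n + 2 n_4; thus k = n_4 + 1.
   For d_u, d_v in {2, 4},
     1/sqrt(d_u d_v) = 1/(2 d_u) + 1/(2 d_v) - c [{d_u, d_v} = {2, 4}],  c = (3/2 - sqrt 2)/4,
   so summing over the edges gives R(G) = n/2 - c m, where m <= 4 n_4 = 4 (k - 1) counts the
   edges joining a vertex of degree 4 to one of degree 2, with equality when no two vertices of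
   degree 4 (in particular no two articulation points) are adjacent. *)

Section CycleSeq.
Variable T : finType.
Implicit Types (t s : seq T) (a b c d h x y : T).

Lemma eq_set2 a b c d : [set a; b] = [set c; d] ->
  (a = c /\ b = d) \/ (a = d /\ b = c).
Proof.
move=> eq_ab_cd.
have /set2P ac : a \in [set c; d] by rewrite -eq_ab_cd set21.
have /set2P bc : b \in [set c; d] by rewrite -eq_ab_cd set22.
have /set2P ca : c \in [set a; b] by rewrite eq_ab_cd set21.
have /set2P da : d \in [set a; b] by rewrite eq_ab_cd set22.
by case: ac bc ca da => -> [] -> [] ? [] ?; subst; auto.
Qed.

Lemma cycle_edgesP t f :
  reflect (exists2 x, x \in t & f = [set x; next t x]) (f \in cycle_edges t).
Proof.
apply: (iffP imsetP) => [[x]|[x]]; rewrite ?inE => xt ->; by exists x; rewrite ?inE.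
Qed.

Lemma next_last h s : uniq (h :: s) -> next (h :: s) (last h s) = h.
Proof. by move=> Uhs; rewrite next_nth mem_last index_last // nth_default. Qed.

Lemma cycle_edges_last h s : uniq (h :: s) -> [set last h s; h] \in cycle_edges (h :: s).
Proof. by move=> Uhs; apply/cycle_edgesP; exists (last h s); rewrite ?mem_last ?next_last. Qed.

Lemma notin_path_avoiding (r : rel T) v x s :
  path (fun a b => [&& r a b, a != v & b != v]) x s -> v \notin s.
Proof.
elim: s x => //= y s IHs x /andP[/and3P[_ _ yv] /IHs vNs].
by rewrite inE negb_or eq_sym yv.
Qed.

Lemma next_next_neq t x : uniq t -> 2 < size t -> x \in t ->
  next t (next t x) != x.
Proof.
move=> Ut t_gt2 xt; case: (rot_to xt) => i s rot_t.
rewrite -!(next_rot i Ut) rot_t.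
have : uniq (x :: s) by rewrite -rot_t rot_uniq.
have : 2 < size (x :: s) by rewrite -rot_t size_rot.
case: s {rot_t} => [|y [|z s]] //= _.
rewrite !inE !negb_or => /andP[/and3P[xy xz _] /andP[/andP[yz _] _]].
rewrite eqxx; case: ifP => [/eqP x_y|_]; first by rewrite x_y eqxx in xy.
by rewrite eqxx eq_sym.
Qed.

Lemma next_prev_neq t x : uniq t -> 2 < size t -> x \in t ->
  next t x != prev t x.
Proof.
move=> Ut t_gt2 xt; have pxt : prev t x \in t by rewrite mem_prev.
by have := next_next_neq Ut t_gt2 pxt; rewrite next_prev.
Qed.

Definition cycle_nbr (C : {set {set T}}) x : {set T} := [set y | [set x; y] \in C].

Lemma cycle_nbr_edges t x : uniq t -> x \in t ->
  cycle_nbr (cycle_edges t) x = [set next t x; prev t x].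
Proof.
move=> Ut xt; apply/setP => y; rewrite !inE; apply/cycle_edgesP/orP.
  case=> z zt /eq_set2[[-> ->]|[-> ->]]; first by left.
  by right; rewrite prev_next.
case=> /eqP ->; first by exists x.
by exists (prev t x); rewrite ?mem_prev // next_prev // setUC.
Qed.

Lemma card_cycle_nbr t x : uniq t -> 2 < size t ->
  #|cycle_nbr (cycle_edges t) x| = if x \in t then 2 else 0.
Proof.
move=> Ut t_gt2; case: ifPn => xt.
  by rewrite cycle_nbr_edges // cards2 next_prev_neq.
apply/eqP; rewrite cards_eq0; apply/eqP/setP => y; rewrite !inE.
apply/negP => /cycle_edgesP[z zt /setP/(_ x)]; rewrite set21 => /esym/set2P[] xz.
  by rewrite xz zt in xt.
by rewrite xz mem_next zt in xt.
Qed.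

Lemma cycle_edges_rot i t : uniq t -> cycle_edges (rot i t) = cycle_edges t.
Proof.
move=> Ut; apply/setP => f.
apply/cycle_edgesP/cycle_edgesP => -[x xt ->]; exists x; rewrite ?mem_rot ?next_rot //.
by rewrite -(mem_rot i).
Qed.

Lemma rot_closing_edge t f : uniq t -> f \in cycle_edges t ->
  exists i h s, rot i t = h :: s /\ f = [set last h s; h].
Proof.
move=> Ut /cycle_edgesP[x xt ->].
have [i s rot_t] : rot_to_spec t (next t x) by apply: rot_to; rewrite mem_next.
exists i, (next t x), s; split=> //; congr [set _; _].
have Urot : uniq (rot i t) by rewrite rot_uniq.
apply: (can_inj (prev_next Urot)); rewrite next_rot //.
by rewrite rot_t next_last // -rot_t.
Qed.

Definition del_edge (r : rel T) u w : rel T :=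
  fun a b => r a b && ([set a; b] != [set u; w]).

Definition darts (r : rel T) : {set T * T} := [set p | r p.1 p.2].

Lemma card_darts (r : rel T) : #|darts r| = \sum_x #|[set y | r x y]|.
Proof.
rewrite -sum1dep_card (eq_bigr _ (fun x _ => esym (sum1dep_card (r x)))).
by rewrite pair_big_dep.
Qed.

Lemma card_darts_set2 (F : {set {set T}}) :
  (forall f, f \in F -> exists a b, a != b /\ f = [set a; b]) ->
  #|darts (fun a b => [set a; b] \in F)| = (#|F|).*2.
Proof.
move=> F_pairs; rewrite -sum1_card.
rewrite (partition_big (fun p : T * T => [set p.1; p.2]) (mem F)) => [|p]; last by rewrite inE.
rewrite -[in RHS]sum1_card -muln2 big_distrl /=.
apply: eq_bigr => f Ff; have [a [b [ab f_ab]]] := F_pairs f Ff; subst f.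
rewrite mul1n sum1dep_card.
have -> : [set p | (p \in darts (fun a b => [set a; b] \in F)) &&
      ([set p.1; p.2] == [set a; b])] = [set (a, b); (b, a)].
  apply/setP => -[x y]; rewrite !inE /=; apply/idP/idP.
    by case/andP => _ /eqP /eq_set2[[-> ->]|[-> ->]]; rewrite eqxx ?orbT.
  by case/orP => /eqP [-> ->]; rewrite ?[[set b; a]]setUC eqxx andbT.
by rewrite cards2; case: eqP => // -[a_b _]; rewrite a_b eqxx in ab.
Qed.

Lemma sum_2_or_4 (d : T -> nat) : (forall x, d x = 2 \/ d x = 4) ->
  \sum_x d x = (#|T| + #|[set x | d x == 4]|).*2.
Proof.
move=> d24; have card4 : \sum_x (d x == 4 : nat) = #|[set x | d x == 4]|.
  by rewrite -sum1dep_card [RHS]big_mkcond; apply: eq_bigr => x _; case: ifP.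
rewrite -card4 -sum1_card -big_split -mul2n big_distrr /=.
by apply: eq_big => [x|x _]; [rewrite inE | case: (d24 x) => ->].
Qed.

End CycleSeq.

Section RootedTree.
Variables (T : finType) (r : rel T) (z : T).
Hypothesis r_sym : symmetric r.
Hypothesis r_conn : forall x, connect r x z.
Hypothesis r_acyclic : forall u w, r u w -> ~~ connect (del_edge r u w) u w.

Definition reach_in x n := [exists t : n.-tuple T, path r x t && (last x t == z)].

Lemma reach_inP x n :
  reflect (exists2 s, size s = n & path r x s && (last x s == z)) (reach_in x n).
Proof.
apply: (iffP existsP) => [[t rt]|[s <- rs]]; first by exists t; rewrite ?size_tuple.
by exists (in_tuple s).
Qed.

Lemma reach_in_exists x : exists n, reach_in x n.
Proof.
have /connectP[s rs zs] := r_conn x.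
by exists (size s); apply/reach_inP; exists s; rewrite // rs -zs eqxx.
Qed.

Definition dist x := ex_minn (reach_in_exists x).

Lemma reach_in_dist x : reach_in x (dist x).
Proof. by rewrite /dist; case: ex_minnP. Qed.

Lemma dist_min x n : reach_in x n -> dist x <= n.
Proof. by rewrite /dist; case: ex_minnP => m _; apply. Qed.

Lemma dist_eq0 x : (dist x == 0) = (x == z).
Proof.
apply/idP/eqP => [/eqP dx0|->].
  have /reach_inP[s s_dist /andP[_ /eqP <-]] := reach_in_dist x.
  by move: s_dist; rewrite dx0; case: s.
by rewrite -leqn0 dist_min //; apply/reach_inP; exists [::]; rewrite //= eqxx.
Qed.

Lemma dist_edge a b : r a b -> dist a <= (dist b).+1.
Proof.
move=> rab; have /reach_inP[s s_dist /andP[rs sz]] := reach_in_dist b.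
by apply: dist_min; apply/reach_inP; exists (b :: s); rewrite /= ?s_dist ?rab ?rs.
Qed.

Lemma exists_parent x : x != z -> exists y, r x y && ((dist y).+1 == dist x).
Proof.
move=> xz; have /reach_inP[[|y s] s_dist /andP[/= rs sz]] := reach_in_dist x.
  by rewrite (eqP sz) eqxx in xz.
case/andP: rs => rxy rs; exists y; rewrite rxy eqn_leq dist_edge // andbT -s_dist ltnS.
by apply: dist_min; apply/reach_inP; exists s; rewrite ?rs.
Qed.

Definition parent x := odflt x [pick y | r x y && ((dist y).+1 == dist x)].

Lemma parentP x : x != z -> r x (parent x) /\ (dist (parent x)).+1 = dist x.
Proof.
rewrite /parent => /exists_parent[y ry]; case: pickP => [p /andP[rp /eqP //]|no_p].
by rewrite no_p in ry.
Qed.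

Definition to_parent : rel T := [rel a b | (a != z) && (b == parent a)].

Lemma connect_to_parent_root x : connect to_parent x z.
Proof.
elim: {x}(dist x) {-2}x (erefl (dist x)) => [|d IHd] x dx.
  by move/eqP: dx; rewrite dist_eq0 => /eqP ->.
have xz : x != z by rewrite -dist_eq0 dx.
apply: connect_trans (connect1 _) (IHd (parent x) _); first by rewrite /to_parent /= xz eqxx.
by have [_] := parentP xz; rewrite dx => -[].
Qed.

Lemma r_irrefl : irreflexive r.
Proof. by move=> x; apply/negP => /r_acyclic; rewrite connect0. Qed.

(* Otherwise the paths to the root from u and from w avoid uw and close a cycle through it. *)
Lemma parent_edge u w : r u w -> dist w <= dist u -> u != z /\ w = parent u.
Proof.
move=> ruw dwu; have uz : u != z.
  apply: contraTneq ruw => uz; move: dwu; rewrite uz.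
  have /eqP -> : dist z == 0 by rewrite dist_eq0.
  by rewrite leqn0 dist_eq0 => /eqP ->; rewrite r_irrefl.
split=> //; apply/eqP; apply: contraT => w_par; case/negP: (r_acyclic ruw).
have up_del : subrel to_parent (connect (del_edge r u w)).
  move=> a b /andP[az /eqP ->]; have [rap dap] := parentP az.
  apply: connect1; rewrite /del_edge rap; apply/eqP => /eq_set2[[au pw]|[aw pu]].
    by rewrite -pw au eqxx in w_par.
  by move: dwu; rewrite -aw -dap pu; lia.
have del_sym : connect_sym (del_edge r u w).
  by apply: sym_connect_sym => a b; rewrite /del_edge r_sym setUC.
apply: connect_trans (connect_sub up_del (connect_to_parent_root u)) _.
by rewrite del_sym; apply: (connect_sub up_del (connect_to_parent_root w)).
Qed.

Lemma card_tree_darts : #|darts r| = (#|T|.-1).*2.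
Proof.
pose up := [set (x, parent x) | x in [set~ z]].
pose down := [set (parent x, x) | x in [set~ z]].
have card_up : #|up| = #|T|.-1 by rewrite card_in_imset ?cardsC1 // => x y _ _ [].
have card_down : #|down| = #|T|.-1 by rewrite card_in_imset ?cardsC1 // => x y _ _ [].
have up_down : up :&: down = set0.
  apply/setP => p; rewrite !inE; apply/negP => /andP[/imsetP[x + ->] /imsetP[y +]].
  rewrite !inE => /parentP[_ dx] /parentP[_ dy] [x_py px_y].
  by rewrite px_y in dx; rewrite -x_py in dy; lia.
have -> : darts r = up :|: down.
  apply/setP => -[u w]; rewrite !inE /=; apply/idP/orP => [ruw|].
    have [dwu | /ltnW duw] := leqP (dist w) (dist u).
      by left; have [uz ->] := parent_edge ruw dwu; apply/imsetP; exists u; rewrite ?inE.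
    right; rewrite r_sym in ruw; have [wz ->] := parent_edge ruw duw.
    by apply/imsetP; exists w; rewrite ?inE.
  by case=> /imsetP[x]; rewrite in_setC1 => /parentP[rxp _] [-> ->]; rewrite // r_sym.
by rewrite cardsU up_down cards0 subn0 card_up card_down addnn.
Qed.

End RootedTree.

Section Cactus.
Variables (T : finType) (e : rel T).
Hypotheses (e_sym : symmetric e) (e_irr : irreflexive e).

Lemma cycle_seq C : C \in cycles e ->
  exists t, [/\ uniq t, 2 < size t, cycle e t & C = cycle_edges t].
Proof.
rewrite inE => /existsP[m /existsP[t /and4P[Ut m_gt2 ct /eqP ->]]].
by exists t; rewrite size_tuple.
Qed.

Lemma cycle_edges_cycles t : uniq t -> 2 < size t -> cycle e t ->
  cycle_edges t \in cycles e.
Proof.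
move=> Ut t_gt2 ct; rewrite inE; apply/existsP.
have t_small : size t < #|T|.+1 by rewrite ltnS -(card_uniqP Ut) max_card.
by exists (Ordinal t_small); apply/existsP; exists (in_tuple t); rewrite /= Ut t_gt2 ct eqxx.
Qed.

Lemma cycle_edge_pair C f : C \in cycles e -> f \in C ->
  exists x y, [/\ x != y, e x y & f = [set x; y]].
Proof.
case/cycle_seq=> t [Ut t_gt2 ct ->] /cycle_edgesP[x xt ->].
have ex := next_cycle ct xt; exists x, (next t x); split=> //.
by apply: contraTneq ex => <-; rewrite e_irr.
Qed.

Lemma cycle_edge_adj C x y : C \in cycles e -> [set x; y] \in C -> e x y.
Proof.
move=> hC /(cycle_edge_pair hC)[a [b [_ eab /eq_set2[[-> ->]|[-> ->]]]]] //.
by rewrite e_sym.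
Qed.

Lemma cycle_through_edge (s : rel T) u w : subrel s e -> s w u ->
  connect (del_edge s u w) u w ->
  exists t, [/\ uniq t, 2 < size t, cycle s t & [set u; w] \in cycle_edges t].
Proof.
move=> se swu /connectP[p pp w_last]; case: (shortenP pp) w_last => p' pp' Up' _ w_last.
have sp' : path s u p' by apply: sub_path pp' => a b /andP[].
exists (u :: p'); split=> //.
- case: p' pp' {Up' sp'} w_last => [|y [|y' q]] //= => [_ wu|/andP[/andP[_ uy_uw] _] wy].
    by move: swu; rewrite wu => /se; rewrite e_irr.
  by rewrite wy eqxx in uy_uw.
- by rewrite /= rcons_path sp' -w_last.
- by rewrite setUC w_last cycle_edges_last.
Qed.

Hypothesis cactus_e : cactus e.

Lemma cycle_edge_unique C D x y : C \in cycles e -> D \in cycles e -> x != y ->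
  [set x; y] \in C -> [set x; y] \in D -> C = D.
Proof.
move=> hC hD xy xyC xyD; apply/eqP; apply: contraT => CD.
have xy_sub : [set x; y] \subset cycle_vertices C :&: cycle_vertices D.
  by apply/subsetP => a a_xy; rewrite inE; apply/andP; split; apply/bigcupP; exists [set x; y].
by have := leq_trans (subset_leq_card xy_sub) (cactus_e.2 _ _ hC hD CD); rewrite cards2 xy.
Qed.

Hypothesis no_bridges_e : no_bridges e.

Lemma edge_in_cycle x y : e x y -> exists2 C, C \in cycles e & [set x; y] \in C.
Proof.
move=> exy; move: (no_bridges_e x y); rewrite /bridge exy negbK.
move=> /forallP/(_ x)/forallP/(_ y) del_xy.
have eyx : e y x by rewrite e_sym.
have [t [Ut t_gt2 ct xy_t]] := @cycle_through_edge e x y (fun _ _ => id) eyx del_xy.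
by exists (cycle_edges t); first exact: cycle_edges_cycles.
Qed.

Lemma deg_cycle_nbr v : deg e v = \sum_(C in cycles e) #|cycle_nbr C v|.
Proof.
transitivity (\sum_y \sum_(C in cycles e) ([set v; y] \in C : nat)).
  rewrite /deg -sum1_card big_mkcond /=; apply: eq_bigr => y _; rewrite inE.
  have [evy|nevy] := boolP (e v y).
    have [C0 hC0 vyC0] := edge_in_cycle evy.
    rewrite (bigD1 C0) //= vyC0 big1 // => C /andP[hC CC0].
    apply/eqP; rewrite eqb0; apply: contra CC0 => vyC.
    have vy : v != y by apply: contraTneq evy => ->; rewrite e_irr.
    by rewrite (cycle_edge_unique hC hC0 vy vyC vyC0).
  rewrite big1 // => C hC; apply/eqP; rewrite eqb0.
  by apply: contraNN nevy; apply: cycle_edge_adj.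
rewrite exchange_big /=; apply: eq_bigr => C _.
by rewrite -sum1_card [RHS]big_mkcond /=; apply: eq_bigr => y _; rewrite inE; case: ifP.
Qed.

Lemma card_cycle_nbr_even_le2 C v : C \in cycles e ->
  ~~ odd #|cycle_nbr C v| /\ #|cycle_nbr C v| <= 2.
Proof. by case/cycle_seq=> t [Ut t_gt2 _ ->]; rewrite card_cycle_nbr //; case: ifP. Qed.

Lemma deg_even v : ~~ odd (deg e v).
Proof.
rewrite deg_cycle_nbr; apply: (big_ind (fun m => ~~ odd m)) => //.
  by move=> a b; rewrite oddD => /negbTE-> /negbTE->.
by move=> C /(card_cycle_nbr_even_le2 v)[].
Qed.

Lemma deg_gt0 v : 1 < #|T| -> 0 < deg e v.
Proof.
case/card_gt1P=> a [b [_ _ ab]].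
have [u uv] : exists u, u != v.
  by case: (eqVneq a v) => [av|]; [exists b; rewrite -av eq_sym | exists a].
have /connectP[[|y p] /= evp u_last] := forallP (forallP cactus_e.1 v) u.
  by rewrite u_last eqxx in uv.
by case/andP: evp => evy _; rewrite /deg card_gt0; apply/set0Pn; exists y; rewrite inE.
Qed.

Lemma deg_2_or_4 v : chemical e -> 1 < #|T| -> deg e v = 2 \/ deg e v = 4.
Proof.
move=> chem_e T_gt1; move: (deg_even v) (deg_gt0 v T_gt1) (chem_e v).
by case: (deg e v) => [|[|[|[|[|d]]]]]; auto.
Qed.

Lemma deg4_two_cycles v : deg e v = 4 -> exists C1 C2 a b,
  [/\ C1 \in cycles e, C2 \in cycles e, C1 != C2, [set v; a] \in C1 & [set v; b] \in C2].
Proof.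
move=> deg4; have : 0 < deg e v by rewrite deg4.
rewrite card_gt0 => /set0Pn[a]; rewrite inE => eva.
have [C1 hC1 vaC1] := edge_in_cycle eva.
have [b] : exists b, e v b && ([set v; b] \notin C1).
  apply/existsP; apply: contraTT isT => /existsPn nb.
  have : [set y | e v y] \subset cycle_nbr C1 v.
    by apply/subsetP => y; rewrite !inE => evy; move: (nb y); rewrite evy negbK.
  move/subset_leq_card; have [_ le2] := card_cycle_nbr_even_le2 v hC1.
  by move/leq_trans/(_ le2); rewrite -/(deg e v) deg4.
case/andP=> evb vb_C1; have [C2 hC2 vbC2] := edge_in_cycle evb.
exists C1, C2, a, b; split=> //; by apply: contraNneq vb_C1 => ->.
Qed.

Lemma deg4_articulation v : deg e v = 4 -> articulation e v.
Proof.
case/deg4_two_cycles=> C1 [C2 [a [b [hC1 hC2 C12 vaC1 vbC2]]]].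
have eva := cycle_edge_adj hC1 vaC1; have evb := cycle_edge_adj hC2 vbC2.
have va : v != a by apply: contraTneq eva => <-; rewrite e_irr.
have vb : v != b by apply: contraTneq evb => <-; rewrite e_irr.
have ab : a != b.
  by apply: contraNneq C12 => a_b; rewrite (cycle_edge_unique hC1 hC2 va vaC1) // a_b.
apply/negP => /forallP/(_ a)/forallP/(_ b); rewrite !(eq_sym _ v) va vb /=.
case/connectP=> p pp b_last; case: (shortenP pp) b_last => {pp}p pp Up _ b_last.
pose t := v :: a :: p.
have Ut : uniq t by rewrite /t cons_uniq inE negb_or va (notin_path_avoiding pp) Up.
have t_gt2 : 2 < size t.
  by rewrite /t; case: p b_last {pp Up t Ut} => //= ba; rewrite ba eqxx in ab.
have ct : cycle e t.
  by rewrite /t /= eva rcons_path (sub_path _ pp) -?b_last 1?e_sym // => x y /andP[].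
have hD := cycle_edges_cycles Ut t_gt2 ct.
have vaD : [set v; a] \in cycle_edges t.
  by apply/cycle_edgesP; exists v; rewrite ?inE //= eqxx.
have vbD : [set v; b] \in cycle_edges t by rewrite setUC b_last (cycle_edges_last Ut).
move: C12; rewrite (cycle_edge_unique hC1 hD va vaC1 vaD).
by rewrite (cycle_edge_unique hC2 hD vb vbC2 vbD) eqxx.
Qed.

Definition chosen_edge (C : {set {set T}}) : {set T} := odflt set0 [pick f in C].

Definition removed_edges := [set chosen_edge C | C in cycles e].

Definition tree_rel : rel T := fun a b => e a b && ([set a; b] \notin removed_edges).

Lemma chosen_edge_in C : C \in cycles e -> chosen_edge C \in C.
Proof.
case/cycle_seq=> [[|x t] [_ //= _ _ ->]]; rewrite /chosen_edge.
case: pickP => // /(_ [set x; next (x :: t) x]) /negbT/negP[].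
by apply/cycle_edgesP; exists x; rewrite ?mem_head.
Qed.

Lemma chosen_edge_inj : {in cycles e &, injective chosen_edge}.
Proof.
move=> C D hC hD CD; have [x [y [xy _ xyC]]] := cycle_edge_pair hC (chosen_edge_in hC).
apply: (cycle_edge_unique hC hD xy); rewrite -xyC; first exact: chosen_edge_in.
by rewrite CD; apply: chosen_edge_in.
Qed.

Lemma removed_edge_cycle C x y : C \in cycles e -> x != y -> [set x; y] \in C ->
  [set x; y] \in removed_edges -> [set x; y] = chosen_edge C.
Proof.
move=> hC xy xyC /imsetP[D hD xyD]; have := chosen_edge_in hD; rewrite -xyD => xy_D.
by rewrite (cycle_edge_unique hC hD xy xyC xy_D).
Qed.

Lemma tree_rel_sym : symmetric tree_rel.
Proof. by move=> a b; rewrite /tree_rel e_sym setUC. Qed.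

Section CycleMinusChosenEdge.
Variables (h : T) (s : seq T).
Hypotheses (Uhs : uniq (h :: s)) (hs_gt2 : 2 < size (h :: s)) (c_hs : cycle e (h :: s)).
Hypothesis chosen_hs : chosen_edge (cycle_edges (h :: s)) = [set last h s; h].

Lemma tree_rel_next a : a \in h :: s -> [set a; next (h :: s) a] != [set last h s; h] ->
  tree_rel a (next (h :: s) a).
Proof.
move=> a_hs not_chosen; have ean := next_cycle c_hs a_hs.
rewrite /tree_rel ean; apply: contra not_chosen => removed; rewrite -chosen_hs; apply/eqP.
apply: removed_edge_cycle => //; first exact: cycle_edges_cycles.
  by apply: contraTneq ean => <-; rewrite e_irr.
by apply/cycle_edgesP; exists a.
Qed.

Lemma connect_tree_rel_around : connect tree_rel h (last h s).
Proof.
case: s Uhs hs_gt2 c_hs chosen_hs tree_rel_next => [|y s'] // Uhys hys_gt2 _ _ next_tree.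
have [hNys Uys] : h \notin y :: s' /\ uniq (y :: s') by apply/andP.
have next_h : next (h :: y :: s') h = y by rewrite /= eqxx.
have t_hy : tree_rel h y.
  rewrite -next_h; apply: next_tree; rewrite ?mem_head // next_h.
  apply/eqP => /eq_set2[[_ y_h]|[_ /= y_last]]; first by rewrite y_h mem_head in hNys.
  move: hys_gt2 Uys y_last; clear; case: s' => // z q _ /andP[yNzq _] y_last.
  by rewrite y_last /= mem_last in yNzq.
have t_ys : path tree_rel y s'.
  apply: (@sub_in_path _ [predD1 h :: y :: s' & h] [rel a b | next (h :: y :: s') a == b]).
  - move=> a b /andP[ah a_c] /andP[bh _] /eqP b_next.
    rewrite -b_next; apply: next_tree; rewrite // b_next.
    by apply/eqP => /setP/(_ h); rewrite set22 in_set2 !(eq_sym h) (negbTE ah) (negbTE bh).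
  - apply/allP => a a_ys; rewrite inE /= in_cons a_ys orbT andbT.
    by apply: contraNneq hNys => <-.
  - by have := cycle_next Uhys; rewrite /= rcons_path => /and3P[].
by apply/connectP; exists (y :: s'); rewrite /= ?t_hy.
Qed.

End CycleMinusChosenEdge.

Lemma connect_tree_rel_edge a b : e a b -> connect tree_rel a b.
Proof.
move=> eab; have [removed|kept] := boolP ([set a; b] \in removed_edges); last first.
  by apply: connect1; rewrite /tree_rel eab kept.
case/imsetP: removed => C hC ab_C.
have [t [Ut t_gt2 ct C_t]] := cycle_seq hC.
have ch_t : chosen_edge C \in cycle_edges t by rewrite -C_t chosen_edge_in.
have [i [h [s [rot_t ch_hs]]]] := rot_closing_edge Ut ch_t.
have Uhs : uniq (h :: s) by rewrite -rot_t rot_uniq.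
have hs_gt2 : 2 < size (h :: s) by rewrite -rot_t size_rot.
have c_hs : cycle e (h :: s) by rewrite -rot_t rot_cycle.
have chosen_hs : chosen_edge (cycle_edges (h :: s)) = [set last h s; h].
  by rewrite -rot_t cycle_edges_rot // -C_t.
have := connect_tree_rel_around Uhs hs_gt2 c_hs chosen_hs.
move: ab_C; rewrite ch_hs => /eq_set2[[-> ->]|[-> ->]] //.
by rewrite (sym_connect_sym tree_rel_sym).
Qed.

Lemma tree_rel_connected x y : connect tree_rel x y.
Proof.
by apply: connect_sub (forallP (forallP cactus_e.1 x) y) => a b /connect_tree_rel_edge.
Qed.

Lemma tree_rel_acyclic u w : tree_rel u w -> ~~ connect (del_edge tree_rel u w) u w.
Proof.
move=> tuw; apply/negP => del_uw; have twu : tree_rel w u by rewrite tree_rel_sym.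
have tree_e : subrel tree_rel e by move=> a b /andP[].
have [t [Ut t_gt2 ct _]] := cycle_through_edge tree_e twu del_uw.
have hD := cycle_edges_cycles Ut t_gt2 (sub_cycle tree_e ct).
have /cycle_edgesP[x xt ch_D] := chosen_edge_in hD.
have /andP[_] := next_cycle ct xt.
by rewrite -ch_D imset_f.
Qed.

Lemma card_cycles : chemical e -> 1 < #|T| ->
  #|cycles e| = #|[set x | deg e x == 4]|.+1.
Proof.
move=> chem_e T_gt1; have /card_gt0P[z _] : 0 < #|T| by apply: ltnW.
have tree_darts := @card_tree_darts T tree_rel z tree_rel_sym
  (fun x => tree_rel_connected x z) tree_rel_acyclic.
have removed_pairs f : f \in removed_edges -> exists a b, a != b /\ f = [set a; b].
  case/imsetP=> C hC ->; have [a [b [ab _ ->]]] := cycle_edge_pair hC (chosen_edge_in hC).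
  by exists a, b.
have card_removed : #|removed_edges| = #|cycles e|.
  by rewrite card_in_imset //; apply: chosen_edge_inj.
pose removed_darts := darts (fun a b => [set a; b] \in removed_edges).
have darts_split : darts e = darts tree_rel :|: removed_darts.
  apply/setP => -[a b]; rewrite !inE /= /tree_rel; apply/idP/idP => [->|].
    by case: ([set a; b] \in removed_edges).
  case/orP => [/andP[] // | /imsetP[C hC ab_ch]].
  by apply: (cycle_edge_adj hC); rewrite ab_ch chosen_edge_in.
have darts_disj : darts tree_rel :&: removed_darts = set0.
  apply/setP => -[a b]; rewrite !inE /= /tree_rel.
  by case: ([set a; b] \in removed_edges); rewrite ?andbF.
have := card_darts e; rewrite darts_split cardsU darts_disj cards0 subn0 tree_darts.
rewrite card_darts_set2 // card_removed (@sum_2_or_4 _ (deg e)) => [|x]; last first.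
  exact: deg_2_or_4.
by lia.
Qed.

End Cactus.

Definition mixed_pair (a b : nat) : nat := (a == 4) && (b == 2).

Local Open Scope ring_scope.

Section RandicDefect.
Variable R : rcfType.

Definition randic_defect : R := (3%:R / 2%:R - Num.sqrt 2%:R) / 4%:R.

Lemma randic_defect_ge0 : 0 <= randic_defect.
Proof.
have s2_sq : Num.sqrt (2%:R : R) ^+ 2 = 2%:R by rewrite sqr_sqrtr ?ler0n.
have s2_ge0 : 0 <= Num.sqrt (2%:R : R) by apply: sqrtr_ge0.
by rewrite /randic_defect; apply: divr_ge0; rewrite ?ler0n // subr_ge0; nra.
Qed.

Lemma inv_sqrt_deg_split (a b : nat) : (a = 2 \/ a = 4)%N -> (b = 2 \/ b = 4)%N ->
  (Num.sqrt (a%:R * b%:R))^-1 = (2%:R * a%:R)^-1 + (2%:R * b%:R)^-1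
     - randic_defect * ((mixed_pair a b)%:R + (mixed_pair b a)%:R) :> R.
Proof.
have sqrt_sq (m : nat) : Num.sqrt ((m * m)%:R : R) = m%:R.
  by rewrite natrM sqrtr_sqr ger0_norm ?ler0n.
have s2_sq : Num.sqrt (2%:R : R) ^+ 2 = 2%:R by rewrite sqr_sqrtr ?ler0n.
have s2_inv : (Num.sqrt (2%:R : R))^-1 = Num.sqrt 2%:R / 2%:R.
  have s2_neq0 : Num.sqrt (2%:R : R) != 0 by rewrite sqrtr_eq0 -ltNge ltr0n.
  by apply: (mulfI s2_neq0); rewrite mulfV // mulrA -expr2 s2_sq mulfV ?pnatr_eq0.
have s8 : Num.sqrt (8%:R : R) = 2%:R * Num.sqrt 2%:R.
  by rewrite (natrM _ 4 2) sqrtrM ?ler0n // (sqrt_sq 2%N).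
rewrite /randic_defect /mixed_pair.
case=> ->; case=> -> /=; rewrite -natrM ?(sqrt_sq 2%N) ?(sqrt_sq 4%N) ?s8 /=;
  by rewrite ?invfM ?s2_inv; field.
Qed.

End RandicDefect.

Section RandicDegrees24.
Variables (R : rcfType) (T : finType) (e : rel T).
Hypothesis e_sym : symmetric e.
Hypothesis deg24 : forall v, deg e v = 2%N \/ deg e v = 4%N.

Definition mixed_darts : nat := (\sum_u \sum_(v | e u v) mixed_pair (deg e u) (deg e v))%N.

Lemma sum_darts_swap (F : T -> T -> R) :
  \sum_u \sum_(v | e u v) F u v = \sum_u \sum_(v | e u v) F v u.
Proof.
rewrite (exchange_big_dep xpredT) //=; apply: eq_bigr => u _.
by apply: eq_bigl => v; rewrite e_sym.
Qed.

Lemma sum_darts_inv_deg :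
  \sum_u \sum_(v | e u v) (2%:R * (deg e u)%:R)^-1 = #|T|%:R / 2%:R :> R.
Proof.
transitivity (\sum_(u : T) (2%:R^-1 : R)); last by rewrite sumr_const mulr_natl.
apply: eq_bigr => u _; rewrite sumr_const -cardsE -/(deg e u) -[_ *+ deg e u]mulr_natr.
have deg_neq0 : (deg e u)%:R != 0 :> R by case: (deg24 u) => ->; rewrite pnatr_eq0.
by field.
Qed.

Lemma randic_mixed_darts :
  randic e R = #|T|%:R / 2%:R - randic_defect R * mixed_darts%:R.
Proof.
have mixed_sum :
    \sum_u \sum_(v | e u v) ((mixed_pair (deg e u) (deg e v))%:R : R) = mixed_darts%:R.
  by rewrite natr_sum; apply: eq_bigr => u _; rewrite natr_sum.
rewrite /randic.
under eq_bigr => u _ do under eq_bigr => v _ do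
  rewrite (inv_sqrt_deg_split R (deg24 u) (deg24 v)).
under eq_bigr => u _ do rewrite sumrB big_split /= -mulr_sumr big_split /=.
rewrite sumrB big_split /= -mulr_sumr big_split /=.
rewrite -(sum_darts_swap (fun u v => (2%:R * (deg e u)%:R)^-1)).
rewrite -(sum_darts_swap (fun u v => (mixed_pair (deg e u) (deg e v))%:R)).
by rewrite sum_darts_inv_deg mixed_sum; field.
Qed.

Lemma darts_from_deg4 :
  (\sum_u \sum_(v | e u v) (deg e u == 4)%N = 4 * #|[set x | deg e x == 4%N]|)%N.
Proof.
rewrite -sum1dep_card big_distrr [RHS]big_mkcond /=; apply: eq_bigr => u _.
rewrite sum_nat_cond_const -/(deg e u); by case: (deg24 u) => ->.
Qed.

Lemma mixed_darts_le : (mixed_darts <= 4 * #|[set x | deg e x == 4%N]|)%N.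
Proof.
rewrite -darts_from_deg4; apply: leq_sum => u _; apply: leq_sum => v _.
by rewrite /mixed_pair; case: (deg e u == 4)%N; case: (deg e v == 2)%N.
Qed.

Lemma mixed_darts_eq : (forall u v, e u v -> deg e u = 4%N -> deg e v = 2%N) ->
  mixed_darts = (4 * #|[set x | deg e x == 4%N]|)%N.
Proof.
move=> deg4_nbr; rewrite -darts_from_deg4; apply: eq_bigr => u _; apply: eq_bigr => v euv.
by rewrite /mixed_pair; case: eqP => // /(deg4_nbr _ _ euv) ->.
Qed.

End RandicDegrees24.

Unset Implicit Arguments.

Theorem corollary4p5 (R : rcfType) (T : finType) (e : rel T)
  (e_sym : symmetric e) (e_irr : irreflexive e)
  (n k : nat) (hn : #|T| = n) (hk : #|cycles e| = k) (hn2 : (2 <= n)%N)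
  (hchem : chemical e) (hcact : cactus e) (hnb : no_bridges e) :
  n%:R / 2%:R - (k%:R - 1) * (3%:R / 2%:R - Num.sqrt 2%:R) <= randic e R /\
  ((forall u v, e u v -> ~~ (articulation e u && articulation e v)) ->
   randic e R = n%:R / 2%:R - (k%:R - 1) * (3%:R / 2%:R - Num.sqrt 2%:R)).
Proof.
have T_gt1 : (1 < #|T|)%N by rewrite hn.
have deg24 v := deg_2_or_4 e_sym e_irr hcact hnb v hchem T_gt1.
set n4 := #|[set x | deg e x == 4%N]|.
have k_n4 : k%:R - 1 = n4%:R :> R.
  by rewrite -hk (card_cycles e_sym e_irr hcact hnb hchem T_gt1) -addn1 natrD addrK.
have defect4 : (k%:R - 1) * (3%:R / 2%:R - Num.sqrt 2%:R) = randic_defect R * (4 * n4)%N%:R.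
  by rewrite k_n4 natrM /randic_defect; field.
rewrite (randic_mixed_darts R e_sym deg24) hn defect4; split.
  by rewrite lerD2l lerN2 ler_wpM2l ?randic_defect_ge0 // ler_nat mixed_darts_le.
move=> no_adj_art; rewrite mixed_darts_eq // => u v euv deg4_u.
case: (deg24 v) => // deg4_v; move: (no_adj_art u v euv).
by rewrite !deg4_articulation.
Qed.
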